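(* Let $U=U_1\times\cdots\times U_m\subset\mathbb{R}^m_+$ (each $U_i\subseteq\mathbb{R}$) be a convex set, $C\subseteq\mathbb{R}^m$, $\overline{U}=U\cap C$. Let $\rho_{\rm ro}=\rho(U^\downarrow,\Pi(\overline{U}^\downarrow))$, $\gamma_{\rm ro}=\gamma(U^\downarrow,\Pi(\overline{U}^\downarrow))$, $\rho_{\rm aro}=\rho(U^\downarrow,\overline{U}^\downarrow)$, $\gamma_{\rm aro}=\gamma(U^\downarrow,\overline{U}^\downarrow)$. Then $\rho_{\rm ro}\ge\rho_{\rm aro}$ and $\gamma_{\rm ro}=\gamma_{\rm aro}$.
   Context: For $S\subseteq\mathbb{R}^m_+$, $S^\downarrow=\{t\in\mathbb{R}^m_+:\exists s\in S,\ t\le s\text{ componentwise}\}$. $\Pi_i(S)$ is the projection of $S$ onto coordinate $i$ and $\Pi(S)=\Pi_1(S)\times\cdots\times\Pi_m(S)$. For $r\ge0$, $rS=\{rx:x\in S\}$; $\rho(S_1,S_2)=\max\{\rho\ge0:\rho S_1\subseteq S_2\}$, $\gamma(S_1,S_2)=\min\{\gamma\ge0:S_2\subseteq\gamma S_1\}$. *)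

From mathcomp Require Import all_boot all_order all_algebra.
From mathcomp Require Import all_classical all_reals.
From mathcomp Require Import ereal.
Set Implicit Arguments. Unset Strict Implicit. Unset Printing Implicit Defensive.
Import Order.TTheory GRing.Theory Num.Theory.
Local Open Scope classical_set_scope.
Local Open Scope ring_scope.

Section Defs.
Variables (R : realType) (m : nat).
Notation V := ('I_m -> R).

Definition nonneg_orth : set V := [set x | forall i, 0 <= x i].

Definition prodset (Ui : 'I_m -> set R) : set V := [set x | forall i, Ui i (x i)].

Definition convex_set (S : set V) : Prop :=
  forall x y, S x -> S y -> forall t : R, 0 <= t -> t <= 1 ->
    S (fun i => t * x i + (1 - t) * y i).

Definition downcl (S : set V) : set V :=
  [set t | (forall i, 0 <= t i) /\ exists2 s, S s & forall i, t i <= s i].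

Definition proj (i : 'I_m) (S : set V) : set R := [set x i | x in S].
Definition Pi (S : set V) : set V := [set x | forall i, proj i S (x i)].

Definition scale (r : R) (S : set V) : set V := [set (fun i => r * x i) | x in S].

Definition rho (S1 S2 : set V) : \bar R :=
  ereal_sup [set r%:E | r in [set r : R | 0 <= r /\ scale r S1 `<=` S2]].

Definition gamma (S1 S2 : set V) : \bar R :=
  ereal_inf [set g%:E | g in [set g : R | 0 <= g /\ S2 `<=` scale g S1]].
End Defs.

From mathcomp Require Import all_boot all_order all_algebra.
From mathcomp Require Import all_classical all_reals.
From mathcomp Require Import ereal.
Import Order.TTheory GRing.Theory Num.Theory.
Local Open Scope classical_set_scope.
Local Open Scope ring_scope.

(* Every set lies inside the box [Pi S] spanned by its projections, which gives
   the inequality for rho and one half of the equality for gamma.  Conversely,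
   a box containing S contains [Pi S]; and since U is a box, so are its
   down-closure and every dilate g (U^down).  Hence S is contained in g (U^down)
   exactly when [Pi S] is, and the two infima defining gamma range over the
   same set. *)

Section Boxes.
Variables (R : realType) (m : nat).
Implicit Types (S : set ('I_m -> R)) (T : 'I_m -> set R).

Lemma subset_Pi S : S `<=` Pi S.
Proof. by move=> x Sx i; exists x. Qed.

Lemma Pi_sub_prodset S T : S `<=` prodset T -> Pi S `<=` prodset T.
Proof. by move=> ST x PSx i; have [s /ST Ts <-] := PSx i; exact: Ts. Qed.

Lemma downcl_prodset T :
  downcl (prodset T) = prodset (fun i => [set t | 0 <= t /\ exists2 s, T i s & t <= s]).
Proof.
apply/seteqP; split=> [t [t0 [s Ts ts]] i|t Tt]; first by split=> //; exists (s i).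
have /choice [s Hs] : forall i, exists s, T i s /\ t i <= s.
  by move=> i; have [_ [s Tis tis]] := Tt i; exists s.
by split=> [i|]; [case: (Tt i) | exists s => i; case: (Hs i)].
Qed.

Lemma scale_prodset (r : R) T :
  scale r (prodset T) = prodset (fun i => [set r * a | a in T i]).
Proof.
apply/seteqP; split=> [_ [x Tx <-] i|y Ty]; first by exists (x i).
have /choice [x Hx] : forall i, exists a, T i a /\ r * a = y i.
  by move=> i; have [a Tia ya] := Ty i; exists a.
by exists x => [i|]; [case: (Hx i) | apply/funext => i; case: (Hx i)].
Qed.

Lemma rho_subset S1 S2 S3 : S2 `<=` S3 -> (rho S1 S2 <= rho S1 S3)%E.
Proof.
move=> S23; apply: ereal_sup_le => _ [r [r0 rS12] <-].
by exists r => //; split=> //; exact: subset_trans S23.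
Qed.

Lemma eq_gamma S1 S2 S3 :
  (forall g : R, 0 <= g -> S2 `<=` scale g S1 <-> S3 `<=` scale g S1) ->
  gamma S1 S2 = gamma S1 S3.
Proof.
move=> S23; rewrite /gamma; congr (ereal_inf (image _ _)).
by apply/funext => g; apply/propext; split=> -[g0 /(S23 g g0)].
Qed.

End Boxes.

Theorem corollary6 (R : realType) (m : nat) (Ui : 'I_m -> set R)
    (C : set ('I_m -> R)) :
  prodset Ui `<=` @nonneg_orth R m ->
  convex_set (prodset Ui) ->
  let U := prodset Ui in
  let Ubar := U `&` C in
  (rho (downcl U) (Pi (downcl Ubar)) >= rho (downcl U) (downcl Ubar))%E /\
  gamma (downcl U) (Pi (downcl Ubar)) = gamma (downcl U) (downcl Ubar).
Proof.
move=> _ _ U Ubar; split; first exact/rho_subset/subset_Pi.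
apply: eq_gamma => g _; split=> sub; first exact: subset_trans (@subset_Pi _ _ _) sub.
move: sub; rewrite /U downcl_prodset scale_prodset; exact: Pi_sub_prodset.
Qed.
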